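(* Let $\mathcal{G}=(\mathcal{V},\mathcal{E})$ be an observed undirected heterogeneous network with $K$ node types, and fix constants $\alpha\in(0,1)$, $\xi\in[0,1]$ and $\phi\in[0,1)$. Let $\mathcal{B}_0\subseteq\mathcal{V}$ be a seed set and let $(\mathcal{B}_i)_{i\ge 0}$ be the sequence of sets produced by the ECoHeN extraction procedure (described in the context) with parameters $\alpha,\xi,\phi$ started at $\mathcal{B}_0$. If there exists $j$ such that $|\mathcal{B}_i|<|\mathcal{V}|/2$ for all $i\ge j$, then the extraction procedure does not cycle.
   Context: Heterogeneous network: an undirected graph (multigraph allowed) in which each node $u$ has exactly one type in $\{1,\dots,K\}$; $V^{[k]}$ is the set of type-$k$ nodes, $E^{[kl]}$ the multiset of edges joining a type-$k$ and a type-$l$ node, and $d^{[k]}(u)$ (the type-$k$ degree of $u$) the number of edge endpoints at $u$ whose other endpoint is of type $k$. For $\mathcal{B}\subseteq\mathcal{V}$ let $B^{[k]}=\mathcal{B}\cap V^{[k]}$ and let $x^{[k]}(u:\mathcal{B})$ be the observed number of type-$k$ nodes in $\mathcal{B}$ adjacent to $u$ (with multiplicity). Significance of connection: for a node $u$ of type $l$ and $\mathcal{B}\subseteq\mathcal{V}$, set $$p_l^{[k]}(u,\mathcal{B})=\frac{\big[\sum_{w\in B^{[k]}}d^{[l]}(w)\big]-\mathbb{I}(k=l)\mathbb{I}(u\in\mathcal{B})\,d^{[k]}(u)}{2^{\mathbb{I}(k=l)}|E^{[kl]}|-\mathbb{I}(k=l)\,d^{[k]}(u)},$$ let $Y_l^{[k]}(u,\mathcal{B})\sim\mathrm{Binom}(d^{[k]}(u),p_l^{[k]}(u,\mathcal{B}))$,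 and define $\hat p_{\mathcal{B}}(u)=\prod_{k=1}^K\mathbb{P}\big(Y_l^{[k]}(u,\mathcal{B})\ge x^{[k]}(u:\mathcal{B})\big)$. (Its value is the same whether or not $u\in\mathcal{B}$.) Extraction procedure: the maximal allowance at iteration $i\ge 1$ is $\mu_i=\max(1,\lfloor\xi\phi^{i-1}|\mathcal{V}|\rfloor)$. Given $\mathcal{B}_{i-1}$ (iterations indexed so the $i$th update uses $\mu_i$), (1) compute $\hat p_{\mathcal{B}_{i-1}}(u)$ for every external node $u\notin\mathcal{B}_{i-1}$, convert these $|\mathcal{V}\setminus\mathcal{B}_{i-1}|$ values to Benjamini–Hochberg (FDR) adjusted $p$-values, and add to $\mathcal{B}_{i-1}$ those external nodes with adjusted $p$-value $\le\alpha$, at most $\mu_i$ of them (those with the smallest adjusted $p$-values), giving $\mathcal{B}_{i-1}^+$; (2) compute $\hat p_{\mathcal{B}_{i-1}^+}(u)$ for every $u\in\mathcal{B}_{i-1}^+$, convert these $|\mathcal{B}_{i-1}^+|$ values to Benjamini–Hochberg adjusted $p$-values, and remove those nodes with adjusted $p$-value $>\alpha$, at most $\mu_i$ of them (those with the largest adjusted $p$-values), giving $\mathcal{B}_i$. The procedure stops when no node is added or removed, i.e. $\mathcal{B}_{i-1}=\mathcal{B}_{i-1}^+=\mathcal{B}_i$. Benjamini–Hochberg adjusted $p$-values of $m$ values $p_{(1)}\le\dots\le p_{(m)}$ are $\tilde p_{(r)}=\min_{s\ge r}\min(1,m\,p_{(s)}/s)$. Cycling: the procedure cycles if it alternates indefinitely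 between two distinct sets of nodes, i.e. there exist $i_0$ and sets $S\ne T$ such that $\{\mathcal{B}_i,\mathcal{B}_{i+1}\}=\{S,T\}$ for all $i\ge i_0$. *)

From HB Require Import structures.
From mathcomp Require Import all_boot all_order all_algebra.
From mathcomp Require Import reals.
Set Implicit Arguments. Unset Strict Implicit. Unset Printing Implicit Defensive.
Import Order.TTheory GRing.Theory Num.Theory.
Local Open Scope ring_scope.

Section ECoHeN.
Variables (R : realType) (V : finType) (K : nat) (typ : V -> 'I_K).
(* The multiset of (undirected) edges; each edge (a, b) joins a and b. *)
Variable E : seq (V * V).

Definition tdeg (k : 'I_K) (u : V) : nat :=
  count (fun e : V * V => ((e.1 == u) && (typ e.2 == k)) || ((e.2 == u) && (typ e.1 == k))) E.

Definition xobs (k : 'I_K) (u : V) (B : {set V}) : nat :=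
  count (fun e : V * V =>
    [&& e.1 == u, e.2 \in B & typ e.2 == k] || [&& e.2 == u, e.1 \in B & typ e.1 == k]) E.

Definition Ecard (k l : 'I_K) : nat :=
  count (fun e : V * V => ((typ e.1 == k) && (typ e.2 == l)) || ((typ e.1 == l) && (typ e.2 == k))) E.

Definition pconn (k : 'I_K) (u : V) (B : {set V}) : R :=
  let l := typ u in
  let ind := (k == l)%:R : R in
  (((\sum_(w in B | typ w == k) tdeg l w)%:R - ind * (u \in B)%:R * (tdeg k u)%:R) /
   ((2 ^ (k == l) * Ecard k l)%:R - ind * (tdeg k u)%:R)).

Definition binom_tail (n : nat) (p : R) (x : nat) : R :=
  \sum_(x <= i < n.+1) ('C(n, i))%:R * p ^+ i * (1 - p) ^+ (n - i).

Definition phat (B : {set V}) (u : V) : R :=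
  \prod_(k < K) binom_tail (tdeg k u) (pconn k u B) (xobs k u B).

(* Benjamini--Hochberg adjusted p-value of u among the values f v, v in S:
   sort S by increasing f (p_(1) <= ... <= p_(m)); if u has rank r then
   \tilde p_(r) = min_{s >= r} min(1, m p_(s) / s). *)
Definition bh (S : {set V}) (f : V -> R) (u : V) : R :=
  let s := sort (fun a b => f a <= f b) (enum S) in
  let m := #|S| in
  \big[Num.min/1]_(index u s <= j < m)
     Num.min 1 (m%:R * f (nth u s j) / (j.+1)%:R).

Definition mu (xi phi : R) (i : nat) : nat :=
  maxn 1 `|Num.floor (xi * phi ^+ i.-1 * (#|V|)%:R)|%N.

Definition add_step (alpha : R) (m : nat) (B : {set V}) : {set V} :=
  let X := ~: B in
  let adj := bh X (phat B) in
  let s := sort (fun a b => adj a <= adj b) (enum X) in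
  let chosen := take m [seq u <- s | adj u <= alpha] in
  B :|: [set u in chosen].

Definition rem_step (alpha : R) (m : nat) (Bp : {set V}) : {set V} :=
  let adj := bh Bp (phat Bp) in
  let s := sort (fun a b => adj b <= adj a) (enum Bp) in
  let chosen := take m [seq u <- s | alpha < adj u] in
  Bp :\: [set u in chosen].

Definition ecohen_update (alpha xi phi : R) (i : nat) (B : {set V}) : {set V} :=
  rem_step alpha (mu xi phi i) (add_step alpha (mu xi phi i) B).

Fixpoint ecohen_seq (alpha xi phi : R) (B0 : {set V}) (i : nat) : {set V} :=
  if i is i'.+1 then ecohen_update alpha xi phi i (ecohen_seq alpha xi phi B0 i')
  else B0.

End ECoHeN.

Definition cycles (V : finType) (B : nat -> {set V}) : Prop :=
  exists i0 (S T : {set V}), S != T /\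
    forall i, (i0 <= i)%N ->
      (B i = S /\ B i.+1 = T) \/ (B i = T /\ B i.+1 = S).

(* The allowance mu_i decreases geometrically to 1, so eventually every update
   adds at most one node and then removes at most one node, each step being a
   deterministic function of the current set.  If such an update maps S to T
   and T back to S with S <> T, the intermediate sets add(S) and add(T) both
   contain S and T and exceed each of them by at most one node, which forces
   add(S) = S :|: T = add(T); hence T = rem(S :|: T) = S. *)
From HB Require Import structures.
From mathcomp Require Import all_boot all_order all_algebra.
From mathcomp Require Import reals.
From mathcomp Require Import lra.
Import Order.TTheory GRing.Theory Num.Theory.
Local Open Scope ring_scope.

Lemma bernoulli_exprn_le1 {R : realDomainType} (x : R) n :
  0 <= x <= 1 -> x ^+ n * (1 + n%:R * (1 - x)) <= 1.
Proof.
case/andP=> x0 x1; elim: n => [|n IHn]; first by rewrite expr0 mul0r addr0 mulr1.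
have slack : 0 <= x ^+ n * ((n%:R + 1) * (1 - x) ^+ 2).
  by rewrite mulr_ge0 ?exprn_ge0 // mulr_ge0 ?sqr_ge0 // addr_ge0.
rewrite exprSr -natr1; nra.
Qed.

Lemma geometric_eventually_lt1 {R : archiRealFieldType} (x c : R) :
  0 <= x < 1 -> exists N, forall n, (N <= n)%N -> x ^+ n * c < 1.
Proof.
case/andP=> x0 x1; have [c_le0|c_gt0] := lerP c 0.
  by exists 0%N => n _; apply: le_lt_trans (ltr01); rewrite mulr_ge0_le0 ?exprn_ge0.
have d_gt0 : 0 < 1 - x by rewrite subr_gt0.
exists (Num.bound (c / (1 - x))) => n hn.
have c_lt : c < n%:R * (1 - x).
  rewrite -ltr_pdivrMr //; apply: lt_le_trans (archi_boundP _) _.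
    by rewrite divr_ge0 ?ltW.
  by rewrite ler_nat.
have /(bernoulli_exprn_le1 x n) : 0 <= x <= 1 by rewrite x0 ltW.
have xn0 : 0 <= x ^+ n by rewrite exprn_ge0.
nra.
Qed.

Lemma mu_eventually1 {R : realType} (V : finType) (xi phi : R) :
  0 <= xi <= 1 -> 0 <= phi < 1 -> exists N, forall i, (N <= i)%N -> mu V xi phi i = 1%N.
Proof.
case/andP=> xi0 xi1 hphi; have phi0 : 0 <= phi by case/andP: hphi.
have [N HN] := geometric_eventually_lt1 phi #|V|%:R hphi.
exists N.+1 => -[//|i] /= hi; rewrite /mu /=.
have y0 : 0 <= phi ^+ i * #|V|%:R by rewrite mulr_ge0 ?exprn_ge0.
have y_lt1 : xi * phi ^+ i * #|V|%:R < 1.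
  by rewrite -mulrA; apply: le_lt_trans (HN i hi); rewrite ler_piMl.
have y_ge0 : 0 <= xi * phi ^+ i * #|V|%:R by rewrite -mulrA mulr_ge0.
have /eqP -> : Num.floor (xi * phi ^+ i * #|V|%:R) == 0.
  by rewrite eq_le floor_le0 y_lt1 floor_ge0 y_ge0.
by [].
Qed.

Lemma cycles_period2 {V : finType} (B : nat -> {set V}) :
  cycles B -> exists i0, forall i, (i0 <= i)%N -> B i.+1 != B i /\ B i.+2 = B i.
Proof.
case=> i0 [S [T [neST HB]]]; exists i0 => i hi.
have hi1 : (i0 <= i.+1)%N by apply: leq_trans hi _.
case: (HB i hi) (HB i.+1 hi1) => -[-> ->] [] [eTS ->];
  by rewrite ?eqxx ?(eq_sym T) ?neST //; move: neST; rewrite eTS eqxx.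
Qed.

Section SingleMoves.
Variable V : finType.

Lemma setU_eq_of_card_setD_le1 (S T A : {set V}) : S != T ->
  S \subset A -> T \subset A -> (#|A :\: S| <= 1)%N -> (#|A :\: T| <= 1)%N -> A = S :|: T.
Proof.
move=> neST sSA sTA /card_le1_eqP AS1 /card_le1_eqP AT1.
apply/eqP; rewrite eqEsubset subUset sSA sTA !andbT; apply/subsetP => x xA.
rewrite inE; apply: contraTT neST; rewrite negb_or negbK => /andP[xS xT].
rewrite eqEsubset; apply/andP; split; apply/subsetP => y yX.
- by apply: contraNT xS => nyT; rewrite (AT1 y x) // !inE ?nyT ?xT ?xA ?(subsetP sSA).
- by apply: contraNT xT => nyS; rewrite (AS1 y x) // !inE ?nyS ?xS ?xA ?(subsetP sTA).
Qed.

Variables (add rem : {set V} -> {set V}).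
Hypothesis add_ext : forall B : {set V}, B \subset add B.
Hypothesis add_le1 : forall B : {set V}, (#|add B :\: B| <= 1)%N.
Hypothesis rem_sub : forall B : {set V}, rem B \subset B.
Hypothesis rem_le1 : forall B : {set V}, (#|B :\: rem B| <= 1)%N.

Lemma add_eq_setU X Y : X != Y -> rem (add X) = Y -> add X = X :|: Y.
Proof.
move=> neXY eY; apply: setU_eq_of_card_setD_le1 => //.
- by rewrite -eY rem_sub.
- by rewrite -eY rem_le1.
Qed.

Lemma rem_add_2cycle_eq X Y : rem (add X) = Y -> rem (add Y) = X -> X = Y.
Proof.
move=> eY eX; apply/eqP; apply: contraT => neXY.
have aX : add X = X :|: Y by apply: add_eq_setU.
have aY : add Y = X :|: Y by rewrite setUC; apply: add_eq_setU; rewrite // eq_sym.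
by move: neXY; rewrite -eY aX -aY eX eqxx.
Qed.

End SingleMoves.

Section ECoHeN.
Variables (R : realType) (V : finType) (K : nat) (typ : V -> 'I_K) (E : seq (V * V)).
Variable alpha : R.

Lemma subset_add_step m (B : {set V}) : B \subset add_step typ E alpha m B.
Proof. exact: subsetUl. Qed.

Lemma card_add_stepD m (B : {set V}) : (#|add_step typ E alpha m B :\: B| <= m)%N.
Proof.
rewrite /add_step setDUl setDv set0U; apply: leq_trans (subset_leq_card (subsetDl _ _)) _.
by rewrite cardsE; apply: leq_trans (card_size _) _; rewrite size_take_min geq_minl.
Qed.

Lemma rem_step_subset m (B : {set V}) : rem_step typ E alpha m B \subset B.
Proof. exact: subsetDl. Qed.

Lemma card_rem_stepD m (B : {set V}) : (#|B :\: rem_step typ E alpha m B| <= m)%N.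
Proof.
rewrite /rem_step setDDr setDv set0U; apply: leq_trans (subset_leq_card (subsetIr _ _)) _.
by rewrite cardsE; apply: leq_trans (card_size _) _; rewrite size_take_min geq_minl.
Qed.

Lemma ecohen_update_2cycle_eq m (X Y : {set V}) : (m <= 1)%N ->
  rem_step typ E alpha m (add_step typ E alpha m X) = Y ->
  rem_step typ E alpha m (add_step typ E alpha m Y) = X -> X = Y.
Proof.
move=> m1; apply: rem_add_2cycle_eq.
- exact: subset_add_step.
- by move=> B; apply: leq_trans (card_add_stepD m B) m1.
- exact: rem_step_subset.
- by move=> B; apply: leq_trans (card_rem_stepD m B) m1.
Qed.

Lemma ecohen_seqS xi phi B0 i :
  ecohen_seq typ E alpha xi phi B0 i.+1 =
  rem_step typ E alpha (mu V xi phi i.+1)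
    (add_step typ E alpha (mu V xi phi i.+1) (ecohen_seq typ E alpha xi phi B0 i)).
Proof. by []. Qed.

End ECoHeN.

Theorem theorem3p2 (R : realType) (V : finType) (K : nat) (typ : V -> 'I_K)
    (E : seq (V * V)) (hE : all (fun e : V * V => e.1 != e.2) E)
    (alpha xi phi : R)
    (halpha : 0 < alpha < 1) (hxi : 0 <= xi <= 1) (hphi : 0 <= phi < 1)
    (B0 : {set V}) :
  (exists j : nat, forall i : nat, (j <= i)%N ->
      (#|ecohen_seq typ E alpha xi phi B0 i|)%:R < (#|V|)%:R / 2 :> R) ->
  ~ cycles (ecohen_seq typ E alpha xi phi B0).
Proof.
move=> _ /cycles_period2 [i0 Hper].
have [N HN] := mu_eventually1 V xi phi hxi hphi.
pose i := maxn i0 N.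
have mu1 k : (i < k)%N -> mu V xi phi k = 1%N.
  by move=> ik; apply: HN; apply: leq_trans (leq_maxr i0 N) (ltnW ik).
have [neq per] := Hper i (leq_maxl i0 N).
case/negP: neq; apply/eqP/esym.
apply: (@ecohen_update_2cycle_eq _ _ _ typ E alpha 1) => //.
- by rewrite -(mu1 i.+1) // -ecohen_seqS.
- by rewrite -(mu1 i.+2) // -ecohen_seqS per.
Qed.
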